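(* Let $\mathcal{G}=(\mathbf{V},\mathbf{E})$ be the directed mixed graph (DMG) of a simple structural causal model (SCM) whose distribution is $\sigma$-faithful to $\mathcal{G}$. Let $\mathbf{S}\subseteq\mathbf{V}$ be the set of selection bias variables, and let $V,W,X,Y\in\mathbf{V}\setminus\mathbf{S}$ be four distinct variables. Suppose that $$V \perp\!\!\!\perp Y \mid \mathbf{S}\cup[\{X\}] \qquad\text{and}\qquad V \not\perp\!\!\!\perp W \mid \mathbf{S}\cup[\{X\}],$$ i.e. (i) $V \perp\!\!\!\perp Y \mid \{X\}\cup\mathbf{S}$ and $V\not\perp\!\!\!\perp Y\mid \mathbf{S}$, and (ii) $V\not\perp\!\!\!\perp W\mid\{X\}\cup\mathbf{S}$ and $V\perp\!\!\!\perp W\mid\mathbf{S}$. Then $X\in\mathrm{an}(Y)$, $Y\notin\mathrm{an}(X)$, $X\notin\mathrm{an}(\mathbf{S})$, and $X$ and $Y$ are unconfounded (there is no bidirected edge $X\leftrightarrow Y$ in $\mathcal{G}$).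
   Context: A directed mixed graph (DMG) $\mathcal{G}=(\mathbf{V},\mathbf{E})$ has nodes $\mathbf{V}$ (random variables) and edges that are directed ($\to$) or bidirected ($\leftrightarrow$) between distinct nodes; cycles are allowed. Directed edges represent direct causal relations, bidirected edges represent latent confounding. $X$ is an ancestor of $Y$ ($X\in\mathrm{an}(Y)$) if there is a directed path from $X$ to $Y$ (every node is its own ancestor); for a set, $\mathrm{an}(\mathbf{X})=\bigcup_{X\in\mathbf{X}}\mathrm{an}(X)$. The strongly connected component of $X$ is $\mathrm{an}(X)\cap\mathrm{de}(X)$. A collider on a walk is a node $X$ with both adjacent edge marks being arrowheads into $X$. A walk between $X$ and $Y$ is $\sigma$-blocked by $\mathbf{C}\subseteq\mathbf{V}$ if $X$ or $Y$ is in $\mathbf{C}$, or the walk contains a collider not in $\mathrm{an}(\mathbf{C})$, or it contains a non-collider in $\mathbf{C}$ that points (with a directed edge) to an adjacent node on the walk lying in a different strongly connected component; $X$ and $Y$ are $\sigma$-separated by $\mathbf{C}$ if every walk between them is $\sigma$-blocked. A simple SCM is one whose DMG satisfies the $\sigma$-separation Markov property (σ-separation implies conditional independence); $\sigma$-faithfulness means conversely that every conditional independence in the distribution corresponds to a $\sigma$-separation, so conditional independences coincide exactly with $\sigma$-separations. Selection bias variables $\mathbf{S}$ are unobserved variables of the model on which the data are implicitly conditioned (samples are included depending on $\mathbf{S}$). Notation for disjoint sets $\{X\},\{Y\},\mathbf{W},\mathbf{Z}$: the minimal conditional independence $X\perp\!\!\!\perp Y\mid \mathbf{W}\cup[\mathbf{Z}]$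 means $X\perp\!\!\!\perp Y\mid\mathbf{W}\cup\mathbf{Z}$ and $X\not\perp\!\!\!\perp Y\mid\mathbf{W}\cup\mathbf{Z}'$ for every proper subset $\mathbf{Z}'\subsetneq\mathbf{Z}$; the minimal conditional dependence $X\not\perp\!\!\!\perp Y\mid\mathbf{W}\cup[\mathbf{Z}]$ means $X\not\perp\!\!\!\perp Y\mid\mathbf{W}\cup\mathbf{Z}$ and $X\perp\!\!\!\perp Y\mid\mathbf{W}\cup\mathbf{Z}'$ for every $\mathbf{Z}'\subsetneq\mathbf{Z}$. *)

From mathcomp Require Import all_boot.
Set Implicit Arguments. Unset Strict Implicit. Unset Printing Implicit Defensive.

(* A directed mixed graph on a finite node set V:
   [dir x y] means x -> y, [bid x y] means x <-> y. Edges are between distinct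
   nodes; bidirected edges are symmetric; directed cycles are allowed. *)
Record DMG (V : finType) := {
  dir : rel V;
  bid : rel V;
  dir_irrefl : irreflexive dir;
  bid_irrefl : irreflexive bid;
  bid_sym : symmetric bid
}.

Section DMGDefs.
Variables (V : finType) (G : DMG V).

Definition anc (y : V) : {set V} := [set x | connect (dir G) x y].
Definition ancS (C : {set V}) : {set V} :=
  [set x | [exists c in C, connect (dir G) x c]].
Definition same_scc (x y : V) : bool := connect (dir G) x y && connect (dir G) y x.

(* A step of a walk from the current node u to the next node w, together with
   the edge used: Fwd = u -> w, Bwd = u <- w, Bid = u <-> w. *)
Inductive mark := Fwd | Bwd | Bid.

Definition edge_ok (u : V) (k : mark) (w : V) : bool :=
  match k with Fwd => dir G u w | Bwd => dir G w u | Bid => bid G u w end.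

Fixpoint walk_ok (u : V) (s : seq (mark * V)) : bool :=
  if s is (k, w) :: s' then edge_ok u k w && walk_ok w s' else true.

Definition wnode (x : V) (s : seq (mark * V)) (i : nat) : V :=
  nth x (x :: map snd s) i.
Definition wkind (s : seq (mark * V)) (i : nat) : mark := nth Fwd (map fst s) i.
Definition wend (x : V) (s : seq (mark * V)) : V := last x (map snd s).

Definition head_at_end (k : mark) : bool := if k is Bwd then false else true.
Definition head_at_start (k : mark) : bool := if k is Fwd then false else true.

Definition collider (s : seq (mark * V)) (i : nat) : bool :=
  head_at_end (wkind s i.-1) && head_at_start (wkind s i).

(* the internal node i has a directed edge, used by the walk, pointing to an
   adjacent node of the walk lying in a different strongly connected component *)
Definition points_out (x : V) (s : seq (mark * V)) (i : nat) : bool :=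
  ((if wkind s i.-1 is Bwd then true else false)
     && ~~ same_scc (wnode x s i) (wnode x s i.-1))
  || ((if wkind s i is Fwd then true else false)
     && ~~ same_scc (wnode x s i) (wnode x s i.+1)).

Definition sigma_blocked (C : {set V}) (x : V) (s : seq (mark * V)) : Prop :=
  x \in C \/ wend x s \in C \/
  exists i, 0 < i < size s /\
    ((collider s i /\ wnode x s i \notin ancS C) \/
     (~~ collider s i /\ wnode x s i \in C /\ points_out x s i)).

Definition sigma_sep (x y : V) (C : {set V}) : Prop :=
  forall s, walk_ok x s -> wend x s = y -> sigma_blocked C x s.

(* The conditional independence model of a distribution is abstracted as a
   relation CI x y C ("x is independent of y given C").  Markov property +
   sigma-faithfulness: the conditional independences coincide with the
   sigma-separations (for distinct x, y outside C). *)
Definition sigma_markov_faithful (CI : V -> V -> {set V} -> Prop) : Prop :=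
  forall x y (C : {set V}), x != y -> x \notin C -> y \notin C ->
    (CI x y C <-> sigma_sep x y C).

Definition min_indep (CI : V -> V -> {set V} -> Prop) (x y : V) (W Z : {set V}) : Prop :=
  CI x y (W :|: Z) /\ (forall Z' : {set V}, Z' \proper Z -> ~ CI x y (W :|: Z')).
Definition min_dep (CI : V -> V -> {set V} -> Prop) (x y : V) (W Z : {set V}) : Prop :=
  ~ CI x y (W :|: Z) /\ (forall Z' : {set V}, Z' \proper Z -> CI x y (W :|: Z')).

End DMGDefs.

From mathcomp Require Import all_boot.
From Stdlib Require Import Classical.
Set Implicit Arguments. Unset Strict Implicit. Unset Printing Implicit Defensive.

(* By faithfulness every hypothesis becomes the existence or non-existence of
   a sigma-open walk.  A walk v ~ w open given S + {x} but blocked by S has a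
   collider c that is an ancestor of x but not of S; let c be the last one.
   Then x is not an ancestor of S, and x is not an ancestor of v: otherwise
   the directed path c -> ... -> v, reversed and followed by the rest of the
   walk after c, would be open given S.  On a walk v ~ y open given S but
   blocked by S + {x}, the blocking node is x as a non-collider with an edge
   out of it; chasing directed edges away from x ends at y (x in an(v) and
   x in an(S) being excluded), so x is an ancestor of y.  Finally the walk
   v ~ c prolonged by c -> ... -> y, if y were an ancestor of x, or by
   c -> ... -> x <-> y, would be open given S + {x}: x is then either a
   collider or a non-collider whose outgoing edge stays inside its strongly
   connected component. *)

Lemma notin_setU1 (T : finType) (S : {set T}) x u :
  u \notin S -> u != x -> u \notin S :|: [set x].
Proof. by move=> uS ux; rewrite in_setU in_set1 negb_or uS ux. Qed.

Lemma proper0_set1 (T : finType) (x : T) : set0 \proper [set x].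
Proof. by rewrite proper0; apply/set0Pn; exists x; rewrite set11. Qed.

Lemma connect_last (T : finType) (e : rel T) c p z :
  path e c p -> z \in c :: p -> connect e z (last c p).
Proof.
move=> + zp; case/splitPl: zp => p1 p2 zl; rewrite cat_path last_cat -zl.
by case/andP=> _ zp2; apply/connectP; exists p2.
Qed.

Section Walks.
Variables (V : finType) (G : DMG V).
Implicit Types (C S : {set V}) (s r pre : seq (mark * V))
  (P : mark -> V -> V -> mark -> V -> bool).

Lemma in_ancS C z :
  reflect (exists2 c, c \in C & connect (dir G) z c) (z \in ancS G C).
Proof. by rewrite inE; apply: (iffP exists_inP) => -[c]; exists c. Qed.

Lemma mem_ancS C z : z \in C -> z \in ancS G C.
Proof. by move=> zC; apply/in_ancS; exists z. Qed.

Lemma ancS_connect C a b : connect (dir G) a b -> b \in ancS G C -> a \in ancS G C.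
Proof.
by move=> ab /in_ancS[c cC bc]; apply/in_ancS; exists c => //; apply: connect_trans bc.
Qed.

Lemma ancSS C (D : {set V}) : C \subset D -> ancS G C \subset ancS G D.
Proof.
move=> /subsetP CD; apply/subsetP => z /in_ancS[c cC zc].
by apply/in_ancS; exists c => //; apply: CD.
Qed.

Lemma ancS_setU1 S x z :
  z \in ancS G (S :|: [set x]) -> z \notin ancS G S -> connect (dir G) z x.
Proof.
case/in_ancS=> c; rewrite in_setU in_set1 => /orP[cS|/eqP-> //] zc.
by case/negP; apply/in_ancS; exists c.
Qed.

Lemma connect_notin_ancS S c z :
  c \notin ancS G S -> connect (dir G) c z -> z \notin S.
Proof. by move=> cS cz; apply: contra cS => zS; apply: ancS_connect cz (mem_ancS zS). Qed.

Lemma wend_cat u s r : wend u (s ++ r) = wend (wend u s) r.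
Proof. by rewrite /wend map_cat last_cat. Qed.

Lemma wend_rcons u s k z : wend u (rcons s (k, z)) = z.
Proof. by rewrite /wend map_rcons last_rcons. Qed.

Lemma wend_map k (u : V) (l : seq V) : wend u [seq (k, z) | z <- l] = last u l.
Proof. by elim: l u => // z l IH u; apply: IH. Qed.

Lemma walk_ok_cat u s r : walk_ok G u (s ++ r) = walk_ok G u s && walk_ok G (wend u s) r.
Proof. by elim: s u => [|[k w] s IH] u //=; rewrite IH andbA. Qed.

Lemma walk_ok_map k u l :
  walk_ok G u [seq (k, z) | z <- l] = path (fun a b => edge_ok G a k b) u l.
Proof. by elim: l u => //= z l IH u; rewrite IH. Qed.

(* [sigma_open C u s] is the negation of [sigma_blocked G C u s] (see
   [sigma_blockedP]), stated by recursion on the walk instead of by indices: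
   [inner_all P] checks [P kl a z kr b] at every inner node [z], where [a] and
   [b] are its neighbours on the walk and [kl], [kr] the kinds of the edges
   [a - z] and [z - b]. *)
Definition points_out_at (kl : mark) (a z : V) (kr : mark) (b : V) : bool :=
  ((if kl is Bwd then true else false) && ~~ same_scc G z a)
  || ((if kr is Fwd then true else false) && ~~ same_scc G z b).

Definition node_open C kl a z kr b : bool :=
  if head_at_end kl && head_at_start kr then z \in ancS G C
  else (z \notin C) || ~~ points_out_at kl a z kr b.

Definition junction P kl a z r : bool :=
  if r is (kr, b) :: _ then P kl a z kr b else true.

Fixpoint inner_all P (u : V) s : bool :=
  if s is (k, z) :: s' then junction P k u z s' && inner_all P z s' else true.

Definition sigma_open C u s : bool :=
  [&& u \notin C, wend u s \notin C & inner_all (node_open C) u s].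

Definition sigma_conn (x y : V) C : Prop :=
  exists s, [/\ walk_ok G x s, wend x s = y & sigma_open C x s].

Lemma wnode_cons u k z s i :
  i <= size s -> wnode u ((k, z) :: s) i.+1 = wnode z s i.
Proof. by move=> le_is; apply: set_nth_default; rewrite /= size_map ltnS. Qed.

Lemma inner_allPn P u s :
  reflect (exists2 i, 0 < i < size s &
             ~~ P (wkind s i.-1) (wnode u s i.-1) (wnode u s i) (wkind s i) (wnode u s i.+1))
          (~~ inner_all P u s).
Proof.
elim: s u => [|[k z] s IH] u /=; first by constructor=> -[i]; rewrite ltn0 andbF.
rewrite negb_and; apply: (iffP orP) => [[|/IH[[|i] //= lt_is nP]]|[[|[|i]] //= lt_is nP]].
- by case: s {IH} => [|[k' b] s] //= nj; exists 1.
- exists i.+2 => //; have le_is := ltnW lt_is; have le_is' := ltnW le_is.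
  by rewrite -[i.+2.-1]/i.+1 !wnode_cons.
- by left; case: s {IH} lt_is nP => [|[k' b] s].
- right; apply/IH; exists i.+1 => //; move: nP.
  have le_is : i.+2 <= size s := lt_is; have le_is' := ltnW le_is.
  by rewrite !wnode_cons // ltnW.
Qed.

Lemma sigma_blockedP C u s : sigma_blocked G C u s <-> ~~ sigma_open C u s.
Proof.
rewrite /sigma_open !negb_and !negbK; split.
- case=> [-> //|[-> |[i [lt_is ni]]]]; rewrite ?orbT //.
  apply/orP; right; apply/orP; right; apply/inner_allPn; exists i => //.
  rewrite /node_open -/(collider s i) -[points_out_at _ _ _ _ _]/(points_out G u s i).
  by case: ni => [[-> ->]|[/negbTE -> [-> ->]]].
- case/orP=> [uC|/orP[eC|/inner_allPn[i lt_is]]]; [by left|by right; left|].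
  rewrite /node_open -/(collider s i) -[points_out_at _ _ _ _ _]/(points_out G u s i) => ni.
  right; right; exists i; split=> //; move: ni; case: ifP => _ ni; first by left.
  by move: ni; rewrite negb_or !negbK => /andP[zC po]; right.
Qed.

Lemma sigma_connN_open x y C s :
  ~ sigma_conn x y C -> walk_ok G x s -> wend x s = y -> ~~ sigma_open C x s.
Proof. by move=> nconn ws es; apply/negP => os; apply: nconn; exists s. Qed.

Lemma sigma_sepNconn x y C : ~ sigma_sep G x y C <-> sigma_conn x y C.
Proof.
split=> [nsep|[s [ws es os]] sep].
- apply: NNPP => nconn; apply: nsep => s ws es; apply/sigma_blockedP.
  exact: sigma_connN_open nconn ws es.
- by move/sigma_blockedP: (sep s ws es); rewrite os.
Qed.

Lemma inner_all_cat P u pre kl z r :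
  inner_all P u (rcons pre (kl, z) ++ r)
  = [&& inner_all P u (rcons pre (kl, z)), junction P kl (wend u pre) z r & inner_all P z r].
Proof.
elim: pre u => [|[k w] pre IH] u //=.
by rewrite IH; case: pre {IH} => [|[? ?] ?]; rewrite /= -!andbA.
Qed.

Lemma inner_all_last_failure P u s :
  ~~ inner_all P u s ->
  exists pre kl z kr b post, [/\ s = rcons pre (kl, z) ++ (kr, b) :: post,
    ~~ P kl (wend u pre) z kr b & inner_all P z ((kr, b) :: post)].
Proof.
elim: s u => [|[k z] s IH] u //=; rewrite negb_and.
case: (boolP (inner_all P z s)) => [oz|/IH[pre [kl [z' [kr [b [post [-> nP oP]]]]]]] _].
  rewrite orbF; case: s {IH} oz => [|[k' b] s] oz // nP.
  by exists [::], k, z, k', b, s.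
by exists ((k, z) :: pre), kl, z', kr, b, post.
Qed.

Lemma inner_all_map P k u l :
  path (fun a b => edge_ok G a k b) u l ->
  (forall a z b, z \in l -> b \in l -> edge_ok G z k b -> P k a z k b) ->
  inner_all P u [seq (k, z) | z <- l].
Proof.
elim: l u => [|z l IH] u //= /andP[_ zl] Pl; apply/andP; split.
- case: l zl Pl {IH} => [|b l] //= /andP[zb _] Pl.
  by apply: Pl; rewrite ?inE ?eqxx ?orbT.
- by apply: IH zl _ => a z' b z'l bl; apply: Pl; rewrite inE ?z'l ?bl orbT.
Qed.

Lemma node_open_fwd C k a z b :
  head_at_end k -> node_open C k a z Fwd b = (z \notin C) || same_scc G z b.
Proof. by case: k => // _; rewrite /node_open /points_out_at /= negbK. Qed.

Lemma node_open_subsetN S C kl a z kr b :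
  S \subset C -> node_open C kl a z kr b -> ~~ node_open S kl a z kr b ->
  [&& head_at_end kl, head_at_start kr, z \in ancS G C & z \notin ancS G S].
Proof.
rewrite /node_open => /subsetP SC; case: ifP => [/andP[-> ->] -> //|_].
rewrite negb_or !negbK => /orP[zC|npts] /andP[zS pts]; last by rewrite pts in npts.
by rewrite SC in zC.
Qed.

Lemma node_openN_subset S C kl a z kr b :
  S \subset C -> node_open S kl a z kr b -> ~~ node_open C kl a z kr b ->
  [&& z \in C, z \notin S & points_out_at kl a z kr b].
Proof.
rewrite /node_open => SC; case: ifP => [_ zS|_].
  by rewrite (subsetP (ancSS SC) _ zS).
rewrite negb_or !negbK => /orP[zS|npts] /andP[zC pts]; last by rewrite pts in npts.
by rewrite zC zS pts.
Qed.

Lemma fwd_walk_anc S z b r :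
  walk_ok G z ((Fwd, b) :: r) -> inner_all (node_open S) z ((Fwd, b) :: r) ->
  connect (dir G) z (wend z ((Fwd, b) :: r)) || (z \in ancS G S).
Proof.
elim: r z b => [|[k b'] r IH] z b; first by rewrite /= andbT => /connect1->.
move=> /andP[zb wr] /andP[jb ir].
case: k wr jb ir => [wr _ ir|_ jb _|_ jb _];
  try by rewrite (ancS_connect (connect1 zb) jb) orbT.
case/orP: (IH b b' wr ir) => [bend|banc].
  by rewrite (connect_trans (connect1 zb) bend).
by rewrite (ancS_connect (connect1 zb) banc) orbT.
Qed.

Lemma bwd_walk_anc S v pre z :
  walk_ok G v (rcons pre (Bwd, z)) -> inner_all (node_open S) v (rcons pre (Bwd, z)) ->
  connect (dir G) z v || (z \in ancS G S).
Proof.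
elim/last_ind: pre z => [|pre [k a] IH] z; first by rewrite /= andbT => /connect1->.
rewrite -[rcons (rcons _ _) _]cats1 walk_ok_cat inner_all_cat wend_rcons /= andbT.
case/andP=> wa za /and3P[ia ja _].
case: k wa ia ja => [_ _ ja|wa ia _|_ _ ja];
  try by rewrite (ancS_connect (connect1 za) ja) orbT.
case/orP: (IH a wa ia) => [av|aanc].
  by rewrite (connect_trans (connect1 za) av).
by rewrite (ancS_connect (connect1 za) aanc) orbT.
Qed.

Lemma sigma_conn_prepend_anc S c v r :
  walk_ok G c r -> sigma_open S c r -> c \notin ancS G S -> connect (dir G) c v ->
  sigma_conn v (wend c r) S.
Proof.
move=> wr /and3P[cS eS ir] cnS /connectP[p cp ->].
case: p cp => [|b p] cp; first by exists r; split; rewrite //= /sigma_open cS eS.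
have zS z : z \in c :: b :: p -> z \notin S.
  by move=> zp; apply: connect_notin_ancS cnS (path_connect cp zp).
have rp : path (fun a z => edge_ok G a Bwd z) (last c (b :: p)) (rev (belast c (b :: p))).
  by rewrite rev_path.
rewrite [belast _ _]/= rev_cons in rp.
exists ([seq (Bwd, z) | z <- rcons (rev (belast b p)) c] ++ r).
rewrite /sigma_open walk_ok_cat walk_ok_map rp map_rcons wend_cat wend_rcons wr eS.
rewrite zS ?mem_last // inner_all_cat ir -map_rcons; split=> //=; rewrite andbT.
apply/andP; split.
- apply: inner_all_map rp _ => a z b' zp _ _; rewrite /node_open /= zS //.
  move: zp; rewrite mem_rcons inE mem_rev => /orP[/eqP->|/mem_belast]; first exact: mem_head.
  by move=> zp; rewrite inE zp orbT.
- by case: r {wr eS ir} => [|[kr b'] r]; rewrite //= /node_open /= cS.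
Qed.

Lemma rcons_cat_fwd pre kl c p :
  head_at_end kl ->
  exists pre' kl', rcons pre (kl, c) ++ [seq (Fwd, z) | z <- p] = rcons pre' (kl', last c p)
                   /\ head_at_end kl'.
Proof.
case/lastP: p => [|p z] hkl; first by exists pre, kl; rewrite cats0.
exists (rcons pre (kl, c) ++ [seq (Fwd, z) | z <- p]), Fwd.
by rewrite map_rcons -rcons_cat last_rcons.
Qed.

Lemma inner_all_fwd_extension C v pre kl c p :
  head_at_end kl -> path (dir G) c p ->
  (forall z b, z \in c :: p -> b \in p -> dir G z b -> (z \notin C) || same_scc G z b) ->
  inner_all (node_open C) v (rcons pre (kl, c)) ->
  inner_all (node_open C) v (rcons pre (kl, c) ++ [seq (Fwd, z) | z <- p]).
Proof.
move=> hkl cp scc ipre; rewrite inner_all_cat ipre andTb; apply/andP; split.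
- case: p cp scc => [|b p] // /andP[cb _] scc.
  by rewrite /junction /= node_open_fwd // scc ?mem_head.
- apply: (inner_all_map (k := Fwd)) cp _ => a z b zp bp zb.
  by rewrite node_open_fwd // scc // inE zp orbT.
Qed.

Section Independence.
Variable CI : V -> V -> {set V} -> Prop.
Hypothesis CI_sigma : sigma_markov_faithful G CI.

Lemma CI_sigma_conn a b C :
  a != b -> a \notin C -> b \notin C -> CI a b C <-> ~ sigma_conn a b C.
Proof.
move=> ab aC bC; split=> [/(CI_sigma ab aC bC) sep /sigma_sepNconn /(_ sep) //|nconn].
by apply/(CI_sigma ab aC bC); apply: NNPP => /sigma_sepNconn.
Qed.

Lemma notCI_sigma_conn a b C :
  a != b -> a \notin C -> b \notin C -> ~ CI a b C <-> sigma_conn a b C.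
Proof.
move=> ab aC bC; split=> [nCI|conn /(CI_sigma_conn ab aC bC) //].
by apply: NNPP => nconn; apply/nCI/(CI_sigma_conn ab aC bC).
Qed.

Lemma min_indep_setU1 a b S x :
  a != b -> a \notin S -> b \notin S -> a != x -> b != x -> min_indep CI a b S [set x] ->
  ~ sigma_conn a b (S :|: [set x]) /\ sigma_conn a b S.
Proof.
move=> ab aS bS ax bx [CIab nCIab]; split.
  exact: (CI_sigma_conn ab (notin_setU1 aS ax) (notin_setU1 bS bx)).1 CIab.
by apply/(notCI_sigma_conn ab aS bS); rewrite -[S]setU0; apply/nCIab/proper0_set1.
Qed.

Lemma min_dep_setU1 a b S x :
  a != b -> a \notin S -> b \notin S -> a != x -> b != x -> min_dep CI a b S [set x] ->
  sigma_conn a b (S :|: [set x]) /\ ~ sigma_conn a b S.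
Proof.
move=> ab aS bS ax bx [nCIab CIab]; split.
  exact: (notCI_sigma_conn ab (notin_setU1 aS ax) (notin_setU1 bS bx)).1 nCIab.
by apply/(CI_sigma_conn ab aS bS); rewrite -[S]setU0; apply/CIab/proper0_set1.
Qed.

End Independence.

End Walks.

Section Proposition3.
Variables (V : finType) (G : DMG V) (S : {set V}) (x : V).
Local Notation C := (S :|: [set x]).

Lemma last_collider_outside_ancS v s :
  walk_ok G v s -> sigma_open G C v s -> ~~ sigma_open G S v s ->
  v \notin S -> wend v s \notin S ->
  exists pre kl c r, [/\ s = rcons pre (kl, c) ++ r, head_at_end kl, c \notin ancS G S,
                         connect (dir G) c x & walk_ok G c r && sigma_open G S c r].
Proof.
move=> ws /and3P[_ _ oC] nS vS eS.
have /inner_all_last_failure[pre [kl [c [kr [b [post [def nP oP]]]]]]] :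
    ~~ inner_all (node_open G S) v s by move: nS; rewrite /sigma_open vS eS.
move: oC; rewrite def inner_all_cat => /and3P[_ oc _].
case/and4P: (node_open_subsetN (subsetUl S [set x]) oc nP) => hkl _ cC cnS.
exists pre, kl, c, ((kr, b) :: post); split=> //; first exact: ancS_setU1 cC cnS.
move: ws; rewrite def walk_ok_cat wend_rcons => /andP[_ ->]; rewrite /sigma_open oP andbT.
have -> : wend c ((kr, b) :: post) = wend v s by rewrite def wend_cat wend_rcons.
by rewrite eS andbT; apply: contra cnS; apply: mem_ancS.
Qed.

Lemma anc_end_of_setU1_blocked v s :
  walk_ok G v s -> sigma_open G S v s -> ~~ sigma_open G C v s -> v != x -> wend v s != x ->
  x \notin ancS G S -> ~ connect (dir G) x v -> connect (dir G) x (wend v s).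
Proof.
move=> ws /and3P[vS eS oS] nC vx ex xnS nxv.
have /inner_all_last_failure[pre [kl [z [kr [b [post [def nP _]]]]]]] :
    ~~ inner_all (node_open G C) v s by move: nC; rewrite /sigma_open !notin_setU1.
move: oS ws; rewrite def inner_all_cat walk_ok_cat wend_rcons.
move=> /and3P[opre oz opost] /andP[wpre wpost].
case/and3P: (node_openN_subset (subsetUl S [set x]) oz nP) => zC zS pts.
have zx : z = x by move: zC; rewrite in_setU in_set1 (negbTE zS) => /eqP.
subst z; case/orP: pts => [/andP[kB _]|/andP[kF _]].
- case: kl kB opre wpre {def nP oz} => // _ opre wpre.
  by have := bwd_walk_anc wpre opre; rewrite (negbTE xnS) orbF => /nxv.
- case: kr kF opost wpost {def nP oz} => // _ opost wpost.
  by have := fwd_walk_anc wpost opost; rewrite (negbTE xnS) orbF wend_cat wend_rcons.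
Qed.

Section ColliderPrefix.
Variables (v : V) (pre : seq (mark * V)) (kl : mark) (c : V) (r : seq (mark * V)).
Hypotheses (w_s : walk_ok G v (rcons pre (kl, c) ++ r))
  (o_s : sigma_open G C v (rcons pre (kl, c) ++ r))
  (hkl : head_at_end kl) (cnS : c \notin ancS G S).

Let w_pre : walk_ok G v (rcons pre (kl, c)).
Proof. by move: w_s; rewrite walk_ok_cat => /andP[]. Qed.

Let o_pre : inner_all (node_open G C) v (rcons pre (kl, c)).
Proof. by case/and3P: o_s => _ _; rewrite inner_all_cat => /andP[]. Qed.

Let vC : v \notin C.
Proof. by case/andP: o_s. Qed.

Lemma fwd_path_scc p :
  path (dir G) c p -> connect (dir G) (last c p) x ->
  forall z b, z \in c :: p -> b \in p -> dir G z b -> (z \notin C) || same_scc G z b.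
Proof.
move=> cp lx z b zp bp zb.
rewrite in_setU in_set1 negb_or (connect_notin_ancS cnS (path_connect cp zp)) /=.
apply/orP; have [zx|] := eqVneq z x; [right|by left]; subst z.
rewrite /same_scc connect1 //=; apply: connect_trans (connect_last cp _) lx.
by rewrite inE bp orbT.
Qed.

Lemma collider_prefix_fwd p :
  path (dir G) c p -> connect (dir G) (last c p) x ->
  walk_ok G v (rcons pre (kl, c) ++ [seq (Fwd, z) | z <- p]) &&
  inner_all (node_open G C) v (rcons pre (kl, c) ++ [seq (Fwd, z) | z <- p]).
Proof.
move=> cp lx; rewrite walk_ok_cat wend_rcons walk_ok_map w_pre cp /=.
exact: inner_all_fwd_extension hkl cp (fwd_path_scc cp lx) o_pre.
Qed.

Lemma collider_prefix_fwd_conn p :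
  path (dir G) c p -> connect (dir G) (last c p) x -> last c p \notin C ->
  sigma_conn G v (last c p) C.
Proof.
move=> cp lx lC; case/andP: (collider_prefix_fwd cp lx) => wt it.
exists (rcons pre (kl, c) ++ [seq (Fwd, z) | z <- p]).
by rewrite /sigma_open wend_cat wend_rcons wend_map vC lC it.
Qed.

Lemma collider_prefix_bid_conn y :
  connect (dir G) c x -> bid G x y -> y \notin C -> sigma_conn G v y C.
Proof.
case/connectP=> p cp lx bxy yC.
have lx' : connect (dir G) (last c p) x by rewrite -lx connect0.
have /andP[wt it] := collider_prefix_fwd cp lx'.
have [pre' [kl' [def hkl']]] := rcons_cat_fwd pre c p hkl.
rewrite def -lx in wt it.
exists (rcons pre' (kl', x) ++ [:: (Bid, y)]).
rewrite walk_ok_cat wt wend_rcons /= bxy /sigma_open wend_cat wend_rcons vC yC.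
rewrite inner_all_cat it /= andbT /junction /node_open hkl' /=.
by rewrite mem_ancS // in_setU set11 orbT.
Qed.

End ColliderPrefix.

End Proposition3.

Theorem proposition3 (V : finType) (G : DMG V) (CI : V -> V -> {set V} -> Prop)
  (S : {set V}) (v w x y : V) :
  sigma_markov_faithful G CI ->
  uniq [:: v; w; x; y] ->
  v \notin S -> w \notin S -> x \notin S -> y \notin S ->
  min_indep CI v y S [set x] ->
  min_dep CI v w S [set x] ->
  [/\ x \in anc G y, y \notin anc G x, x \notin ancS G S & ~~ bid G x y].
Proof.
move=> mf uq vS wS _ yS mi md.
move: uq; rewrite /= !inE !negb_or => /and4P[/and3P[vw vx vy] /andP[wx _] xy _].
have yx : y != x by rewrite eq_sym.
have [sep_vy [s1 [ws1 es1 os1]]] := min_indep_setU1 mf vy vS yS vx yx mi.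
have [[s2 [ws2 es2 os2]] sep_vw] := min_dep_setU1 mf vw vS wS vx wx md.
have e2S : wend v s2 \notin S by rewrite es2.
have [pre [kl [c [r [def hkl cnS cx /andP[wr or]]]]]] :=
  last_collider_outside_ancS ws2 os2 (sigma_connN_open sep_vw ws2 es2) vS e2S.
have xnS : x \notin ancS G S by apply: contra cnS; apply: ancS_connect cx.
have nxv : ~ connect (dir G) x v.
  move=> xv; apply: sep_vw; rewrite -es2 def wend_cat wend_rcons.
  exact: sigma_conn_prepend_anc wr or cnS (connect_trans cx xv).
have xy' : connect (dir G) x y.
  rewrite -es1; apply: (anc_end_of_setU1_blocked ws1 os1 _ vx _ xnS nxv); last by rewrite es1.
  exact: sigma_connN_open sep_vy ws1 es1.
have yC := notin_setU1 yS yx.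
rewrite def in ws2 os2; split=> //.
- apply/negP => yx'; case/connectP: (connect_trans cx xy') => p cp yl.
  by apply: sep_vy; rewrite yl; apply: (collider_prefix_fwd_conn ws2 os2 hkl cnS cp); rewrite -yl.
- by move: xnS; rewrite inE.
- by apply/negP => bxy; apply: sep_vy; apply: (collider_prefix_bid_conn ws2 os2 hkl cnS cx bxy yC).
Qed.
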